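(* Let $W:\mathbb{N}^\star\times\mathbb{N}^\star\to\mathbb{C}$. Then $(\mathbb{M},\square_W,\times)$ is a commutative ring (with $\square_W$ as addition and pointwise product $\times$ as multiplication) if and only if $W(a,b)=1$ when $\gcd(a,b)=1$ and $W(a,b)=0$ otherwise.
   Context: $\mathbb{M}$ is the set of functions $F:\mathbb{N}^\star\to\mathbb{C}$ with $F(1)=1$ and $F(ab)=F(a)F(b)$ whenever $\gcd(a,b)=1$. For a weight $W$, $(F\,\square_W\,G)(m)=\sum_{ab=m}F(a)G(b)W(a,b)$, and $(F\times G)(m)=F(m)G(m)$. Being a commutative ring includes that both operations map $\mathbb{M}\times\mathbb{M}$ into $\mathbb{M}$. *)

From HB Require Import structures.
From mathcomp Require Import all_boot all_order all_algebra.
Set Implicit Arguments. Unset Strict Implicit. Unset Printing Implicit Defensive.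
Import Order.TTheory GRing.Theory Num.Theory.
Local Open Scope ring_scope.

Section Defs.
Variable C : numClosedFieldType.

(* Arithmetic functions N* -> C are modelled as nat -> C; the value at 0 is
   irrelevant, and equality of arithmetic functions is equality on N*. *)
Definition feq (F G : nat -> C) : Prop := forall m, (0 < m)%N -> F m = G m.

Definition mult_fun (F : nat -> C) : Prop :=
  F 1%N = 1 /\
  forall a b : nat, (0 < a)%N -> (0 < b)%N -> coprime a b -> F (a * b)%N = F a * F b.

Definition wconv (W : nat -> nat -> C) (F G : nat -> C) : nat -> C :=
  fun m => \sum_(d <- divisors m) F d * G (m %/ d)%N * W d (m %/ d)%N.

Definition pmul (F G : nat -> C) : nat -> C := fun m => F m * G m.

Definition is_comm_ring (P : (nat -> C) -> Prop)
    (add mul : (nat -> C) -> (nat -> C) -> (nat -> C)) : Prop :=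
  (forall F G, P F -> P G -> P (add F G)) /\
  (forall F G, P F -> P G -> P (mul F G)) /\
  (forall F G H, P F -> P G -> P H -> feq (add F (add G H)) (add (add F G) H)) /\
  (forall F G, P F -> P G -> feq (add F G) (add G F)) /\
  (exists Z, P Z /\
     (forall F, P F -> feq (add Z F) F) /\
     (forall F, P F -> exists G, P G /\ feq (add F G) Z)) /\
  (forall F G H, P F -> P G -> P H -> feq (mul F (mul G H)) (mul (mul F G) H)) /\
  (forall F G, P F -> P G -> feq (mul F G) (mul G F)) /\
  (exists U, P U /\ forall F, P F -> feq (mul U F) F) /\
  (forall F G H, P F -> P G -> P H ->
     feq (mul F (add G H)) (add (mul F G) (mul F H))).

End Defs.

From HB Require Import structures.
From mathcomp Require Import all_boot all_order all_algebra.
From mathcomp Require Import zify.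
Import Order.TTheory GRing.Theory Num.Theory.
Local Open Scope ring_scope.

(* If W is the coprimality indicator, the W-convolution is the unitary
   convolution: it preserves multiplicativity, and at a prime power p^k it
   only sees the divisors 1 and p^k, so (F box_W G)(p^k) = F(p^k) + G(p^k).
   Since multiplicative functions are determined by their values at prime
   powers, (M, box_W, x) is then isomorphic to a product of copies of C.
   Conversely, the ring axioms evaluated on well-chosen multiplicative
   functions force the values of W: the zero element and commutativity with
   delta_1 give W(1,n) = W(n,1) = 1; the W-convolution of the divisor
   indicators of coprime a and b must be multiplicative, giving W(a,b) = 1;
   and when a prime p divides a and b, distributivity of the indicator of
   v_p(n) in {0, v_p(ab)} over the W-convolution of those indicators gives
   W(a,b) = 0. *)

Lemma big_seq_only1 {R : nmodType} {I : eqType} (s : seq I) (i : I) (F : I -> R) :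
  uniq s -> i \in s -> {in s, forall j, j != i -> F j = 0} ->
  \sum_(j <- s) F j = F i.
Proof.
move=> s_uniq s_i F0; rewrite (bigD1_seq i) //= big1_seq ?addr0 // => j /andP[].
by move=> ji sj; apply: F0.
Qed.

Lemma big_seq_only2 {R : nmodType} {I : eqType} (s : seq I) (i1 i2 : I) (F : I -> R) :
  uniq s -> i1 \in s -> i2 \in s -> i1 != i2 ->
  {in s, forall j, j != i1 -> j != i2 -> F j = 0} ->
  \sum_(j <- s) F j = F i1 + F i2.
Proof.
move=> s_uniq s_i1 s_i2 i12 F0; rewrite (bigD1_seq i1) //=; congr (_ + _).
rewrite -big_filter (big_seq_only1 _ i2) ?filter_uniq //.
  by rewrite mem_filter eq_sym i12.
by move=> j; rewrite mem_filter => /andP[ji1 sj]; apply: F0.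
Qed.

Lemma perm_divisors_coprimeM a b : (0 < a)%N -> (0 < b)%N -> coprime a b ->
  perm_eq (divisors (a * b)) [seq (d1 * d2)%N | d1 <- divisors a, d2 <- divisors b].
Proof.
move=> a_gt0 b_gt0 co_ab; have ab_gt0 : (0 < a * b)%N by rewrite muln_gt0 a_gt0.
have gcd_aM u v : (u %| a)%N -> (v %| b)%N -> gcdn a (u * v) = u.
  by move=> ua vb; rewrite Gauss_gcdl ?(coprime_dvdr vb co_ab) //; apply/gcdn_idPr.
have gcd_bM u v : (u %| a)%N -> (v %| b)%N -> gcdn b (u * v) = v.
  move=> ua vb; rewrite Gauss_gcdr; first exact/gcdn_idPr.
  by rewrite coprime_sym (coprime_dvdl ua co_ab).
apply: uniq_perm; first exact: divisors_uniq.
- apply: allpairs_uniq; try exact: divisors_uniq.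
  move=> [u1 v1] [u2 v2] /allpairsP[[x1 y1] [/= xa1 yb1 [-> ->]]].
  move=> /allpairsP[[x2 y2] [/= xa2 yb2 [-> ->]]] /= e12.
  move: xa1 yb1 xa2 yb2; rewrite -!dvdn_divisors // => xa1 yb1 xa2 yb2.
  by congr pair; [rewrite -(gcd_aM _ _ xa1 yb1) e12 gcd_aM
                 | rewrite -(gcd_bM _ _ xa1 yb1) e12 gcd_bM].
- move=> d; rewrite -dvdn_divisors //; apply/idP/allpairsP => [d_ab|[[u v] [/= + + ->]]].
    exists (gcdn d a, gcdn d b); rewrite /= -!dvdn_divisors // !dvdn_gcdr.
    split=> //; apply/eqP; rewrite eqn_dvd; apply/andP; split.
      rewrite muln_gcdl dvdn_gcd dvdn_mulr //= muln_gcdr dvdn_gcd d_ab andbT.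
      exact: dvdn_mull.
    rewrite Gauss_dvd ?dvdn_gcdl //.
    exact: coprime_dvdl (dvdn_gcdr _ _) (coprime_dvdr (dvdn_gcdr _ _) co_ab).
  by rewrite -!dvdn_divisors // => ua vb; apply: dvdn_mul.
Qed.

Section ArithmeticFunctions.
Variable C : numClosedFieldType.
Implicit Types F G H : nat -> C.

Definition cst1 : nat -> C := fun=> 1.

Definition delta1 : nat -> C := fun n => if n == 1%N then 1 else 0.

Definition dvd_ind (a : nat) : nat -> C := fun n => if (n %| a)%N then 1 else 0.

Definition logn_ind (p k : nat) : nat -> C :=
  fun n => if (logn p n == 0%N) || (logn p n == k) then 1 else 0.

Definition omega_sign : nat -> C := fun n => (-1) ^+ size (primes n).

Lemma mult_fun_cst1 : mult_fun cst1.
Proof. by split=> // *; rewrite /cst1 mulr1. Qed.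

Lemma mult_fun_delta1 : mult_fun delta1.
Proof.
split=> [|a b _ _ _]; rewrite /delta1 //= muln_eq1.
by case: (a == 1%N); case: (b == 1%N); rewrite ?mulr0 ?mulr1.
Qed.

Lemma mult_fun_dvd_ind a : mult_fun (dvd_ind a).
Proof.
split=> [|x y _ _ co_xy]; rewrite /dvd_ind ?dvd1n // Gauss_dvd //.
by case: (x %| a)%N; case: (y %| a)%N; rewrite ?mulr0 ?mulr1.
Qed.

Lemma mult_fun_logn_ind p k : prime p -> mult_fun (logn_ind p k).
Proof.
move=> p_pr; split=> [|a b a_gt0 b_gt0 co_ab]; rewrite /logn_ind ?logn1 // lognM //.
have [p_a|pNa] := boolP (p %| a)%N.
  by rewrite (logn_coprime (coprime_dvdl p_a co_ab)) addn0 eqxx mulr1.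
by rewrite (@logn_coprime p a) ?prime_coprime // add0n eqxx mul1r.
Qed.

Lemma mult_fun_omega_sign : mult_fun omega_sign.
Proof.
split=> [|a b a_gt0 b_gt0 co_ab]; rewrite /omega_sign // -exprD -size_cat.
congr (_ ^+ _); apply: perm_size; apply: uniq_perm => [||p].
- exact: primes_uniq.
- by rewrite cat_uniq !primes_uniq -coprime_has_primes // co_ab.
- by rewrite mem_cat primesM.
Qed.

Lemma mult_fun_pmul {F G} : mult_fun F -> mult_fun G -> mult_fun (pmul F G).
Proof.
move=> [F1 FM] [G1 GM]; split=> [|a b a_gt0 b_gt0 co_ab]; rewrite /pmul.
  by rewrite F1 G1 mulr1.
by rewrite FM // GM // mulrACA.
Qed.

Lemma omega_sign_prime_power p k : prime p -> (0 < k)%N -> omega_sign (p ^ k) = -1.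
Proof. by move=> p_pr k_gt0; rewrite /omega_sign primesX // primes_prime. Qed.

Lemma feq_mult_prime_powers F G : mult_fun F -> mult_fun G ->
  (forall p k, prime p -> (0 < k)%N -> F (p ^ k)%N = G (p ^ k)%N) -> feq F G.
Proof.
move=> [F1 FM] [G1 GM] FG; elim/ltn_ind=> m IH m_gt0.
have [m_le1|m_gt1] := leqP m 1%N.
  have -> : m = 1%N by lia.
  by rewrite F1 G1.
pose p := pdiv m; have p_pr : prime p := pdiv_prime m_gt1.
have p_m : p \in \pi(m) by rewrite mem_primes p_pr m_gt0 pdiv_dvd.
have mE : (m`_p * m`_p^')%N = m := partnC p m_gt0.
have [mp'1|mp'_gt1] := leqP m`_p^' 1%N.
  have -> : m = (p ^ logn p m)%N.
    by rewrite -p_part -{1}mE; have := part_gt0 p^' m; nia.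
  by apply: FG; rewrite // logn_gt0.
have mp_gt1 : (1 < m`_p)%N by rewrite p_part_gt1.
rewrite -mE FM ?part_gt0 ?coprime_partC // GM ?part_gt0 ?coprime_partC //.
by rewrite !IH ?part_gt0 //; nia.
Qed.

Definition dvd_supported (a : nat) F := forall n, ~~ (n %| a)%N -> F n = 0.

Lemma dvd_ind_supported a : dvd_supported a (dvd_ind a).
Proof. by move=> n /negbTE; rewrite /dvd_ind => ->. Qed.

Lemma pmul_supportedr {a F G} : dvd_supported a G -> dvd_supported a (pmul F G).
Proof. by move=> G0 n /G0; rewrite /pmul => ->; rewrite mulr0. Qed.

Section Convolution.
Variable W : nat -> nat -> C.

Lemma wconv1 F G : wconv W F G 1 = F 1%N * G 1%N * W 1%N 1%N.
Proof. by rewrite /wconv (_ : divisors 1 = [:: 1%N]) // big_seq1. Qed.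

Lemma wconv_delta1l F n : (0 < n)%N -> wconv W delta1 F n = F n * W 1%N n.
Proof.
move=> n_gt0; rewrite /wconv (big_seq_only1 _ 1%N) ?divisors_uniq ?divisor1 //.
  by rewrite /delta1 eqxx divn1 mul1r.
by move=> d _ /negbTE d1; rewrite /delta1 d1 !mul0r.
Qed.

Lemma wconv_delta1r F n : (0 < n)%N -> wconv W F delta1 n = F n * W n 1%N.
Proof.
move=> n_gt0; rewrite /wconv (big_seq_only1 _ n) ?divisors_uniq ?divisors_id //.
  by rewrite /delta1 divnn n_gt0 eqxx mulr1.
move=> d; rewrite -dvdn_divisors // => /divnK d_n dNn; rewrite /delta1.
case: eqP => [nd1|]; last by rewrite mulr0 mul0r.
by move: dNn; rewrite -d_n nd1 mul1n eqxx.
Qed.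

Lemma wconv_supported_mul {F G a b} : (0 < a)%N -> (0 < b)%N ->
  dvd_supported a F -> dvd_supported b G -> wconv W F G (a * b) = F a * G b * W a b.
Proof.
move=> a_gt0 b_gt0 F0 G0; have ab_gt0 : (0 < a * b)%N by rewrite muln_gt0 a_gt0.
rewrite /wconv (big_seq_only1 _ a) ?divisors_uniq -?dvdn_divisors ?dvdn_mulr //.
  by rewrite mulKn.
move=> d; rewrite -dvdn_divisors // => _ dNa.
have [/dvdnP[k ak]|/F0->] := boolP (d %| a)%N; last by rewrite !mul0r.
have [abd_b|/G0->] := boolP (a * b %/ d %| b)%N; last by rewrite mulr0 mul0r.
have d_gt0 : (0 < d)%N by move: a_gt0; rewrite ak muln_gt0 => /andP[].
move: abd_b; rewrite ak -mulnA [(d * b)%N]mulnC mulnA mulnK //.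
move=> /(dvdn_leq b_gt0) kb_le_b.
have k1 : k = 1%N by move: a_gt0; rewrite ak; nia.
by move: dNa; rewrite ak k1 mul1n eqxx.
Qed.

Lemma wconv_coprime_supportedr {F G a b} : (0 < a)%N -> coprime a b ->
  dvd_supported b G -> wconv W F G a = F a * G 1%N * W a 1%N.
Proof.
move=> a_gt0 co_ab G0.
rewrite /wconv (big_seq_only1 _ a) ?divisors_uniq ?divisors_id ?divnn ?a_gt0 //.
move=> d; rewrite -dvdn_divisors // => /divnK d_a dNa.
have [ad_b|/G0->] := boolP (a %/ d %| b)%N; last by rewrite mulr0 mul0r.
suff ad1 : (a %/ d)%N = 1%N by move: dNa; rewrite -d_a ad1 mul1n eqxx.
apply/eqP; rewrite -dvdn1 -(eqP co_ab) dvdn_gcd ad_b andbT.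
by rewrite -{2}d_a dvdn_mulr.
Qed.

Lemma wconv_coprime_supportedl {F G a b} : (0 < b)%N -> coprime a b ->
  dvd_supported a F -> wconv W F G b = F 1%N * G b * W 1%N b.
Proof.
move=> b_gt0 co_ab F0.
rewrite /wconv (big_seq_only1 _ 1%N) ?divisors_uniq ?divisor1 ?divn1 //.
move=> d; rewrite -dvdn_divisors // => d_b d1.
have [d_a|/F0->] := boolP (d %| a)%N; last by rewrite !mul0r.
by move: d1; rewrite -dvdn1 -(eqP co_ab) dvdn_gcd d_a d_b.
Qed.

Lemma weight_1n_of_zero Z : mult_fun Z ->
  feq (wconv W Z delta1) delta1 -> feq (wconv W Z cst1) cst1 ->
  (forall n, (0 < n)%N -> W n 1%N = W 1%N n) ->
  forall n, (0 < n)%N -> W 1%N n = 1.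
Proof.
move=> [Z1 _] Z_delta1 Z_cst1 W_sym.
have ZW0 d : (1 < d)%N -> Z d * W 1%N d = 0.
  move=> d_gt1; have d_gt0 := ltnW d_gt1.
  by rewrite -W_sym // -wconv_delta1r // Z_delta1 // /delta1 gtn_eqF.
elim/ltn_ind=> n IH n_gt0; have := Z_cst1 n n_gt0.
have [n_le1|n_gt1] := leqP n 1%N.
  have -> : n = 1%N by lia.
  by rewrite wconv1 Z1 /cst1 !mul1r.
rewrite /wconv (big_seq_only2 _ 1%N n) ?divisors_uniq ?divisor1
  ?divisors_id ?ltn_eqF //.
  by rewrite divn1 divnn n_gt0 /cst1 Z1 !mul1r !mulr1 W_sym // ZW0 // addr0.
move=> d; rewrite -dvdn_divisors // => d_n d1 dn.
have d_gt0 := dvdn_gt0 n_gt0 d_n.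
have d_lt_n : (d < n)%N by have := dvdn_leq n_gt0 d_n; lia.
have /ZW0 : (1 < d)%N by lia.
by rewrite IH // mulr1 /cst1 => ->; rewrite !mul0r.
Qed.

Lemma weight_coprime a b : (0 < a)%N -> (0 < b)%N -> coprime a b ->
  mult_fun (wconv W (dvd_ind a) (dvd_ind b)) -> W a 1%N = 1 -> W 1%N b = 1 ->
  W a b = 1.
Proof.
move=> a_gt0 b_gt0 co_ab [_ convM] Wa1 W1b; have := convM a b a_gt0 b_gt0 co_ab.
have [supp_a supp_b] := (dvd_ind_supported a, dvd_ind_supported b).
rewrite (wconv_supported_mul a_gt0 b_gt0 supp_a supp_b).
rewrite (wconv_coprime_supportedr a_gt0 co_ab supp_b).
rewrite (wconv_coprime_supportedl b_gt0 co_ab supp_a).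
by rewrite /dvd_ind !dvdnn !dvd1n !mul1r Wa1 W1b mulr1.
Qed.

Lemma weight_not_coprime a b : (0 < a)%N -> (0 < b)%N -> ~~ coprime a b ->
  (forall F G H, mult_fun F -> mult_fun G -> mult_fun H ->
     feq (pmul F (wconv W G H)) (wconv W (pmul F G) (pmul F H))) ->
  W a b = 0.
Proof.
move=> a_gt0 b_gt0 nco_ab distr.
have ab_gt0 : (0 < a * b)%N by rewrite muln_gt0 a_gt0.
move: nco_ab; rewrite coprime_has_primes // negbK => /hasP[p p_b p_a].
have p_pr : prime p by move: p_b; rewrite mem_primes => /andP[].
pose k := logn p (a * b).
have := distr _ _ _ (mult_fun_logn_ind p k p_pr) (mult_fun_dvd_ind a)
  (mult_fun_dvd_ind b) _ ab_gt0.
have [supp_a supp_b] := (dvd_ind_supported a, dvd_ind_supported b).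
rewrite (wconv_supported_mul a_gt0 b_gt0 (pmul_supportedr supp_a)
  (pmul_supportedr supp_b)) /pmul.
rewrite (wconv_supported_mul a_gt0 b_gt0 supp_a supp_b).
have -> : logn_ind p k (a * b) = 1 by rewrite /logn_ind eqxx orbT.
have -> : logn_ind p k a = 0.
  move: p_a p_b; rewrite /logn_ind /k lognM // -!logn_gt0.
  by case: ifP => //; lia.
by rewrite /dvd_ind !dvdnn !mulr1 !mul1r !mul0r.
Qed.

Lemma unitary_weight_of_comm_ring : is_comm_ring (@mult_fun C) (wconv W) (@pmul C) ->
  forall a b : nat, (0 < a)%N -> (0 < b)%N -> W a b = (if coprime a b then 1 else 0).
Proof.
move=> [add_mult [_ [_ [addC [[Z [Z_mult [Z_id _]]] [_ [_ [_ distr]]]]]]]].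
have W_sym n : (0 < n)%N -> W n 1%N = W 1%N n.
  move=> n_gt0; have := addC _ _ mult_fun_cst1 mult_fun_delta1 n n_gt0.
  by rewrite wconv_delta1r // wconv_delta1l // /cst1 !mul1r.
have W1n := weight_1n_of_zero Z Z_mult (Z_id _ mult_fun_delta1)
  (Z_id _ mult_fun_cst1) W_sym.
move=> a b a_gt0 b_gt0; case: ifPn => [co_ab|nco_ab]; last exact: weight_not_coprime.
apply: weight_coprime; rewrite ?W_sym ?W1n //.
by apply: add_mult; apply: mult_fun_dvd_ind.
Qed.

Section UnitaryWeight.
Hypothesis W_unitary : forall a b : nat, (0 < a)%N -> (0 < b)%N ->
  W a b = (if coprime a b then 1 else 0).

Lemma wconv_term_coprimeM F G a b d1 d2 : mult_fun F -> mult_fun G ->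
    (0 < a)%N -> (0 < b)%N -> coprime a b -> (d1 %| a)%N -> (d2 %| b)%N ->
  let term m d := F d * G (m %/ d)%N * W d (m %/ d)%N in
  term (a * b)%N (d1 * d2)%N = term a d1 * term b d2.
Proof.
move=> [_ FM] [_ GM] a_gt0 b_gt0 co_ab d1_a d2_b term; rewrite /term.
have [d1_gt0 d2_gt0] := (dvdn_gt0 a_gt0 d1_a, dvdn_gt0 b_gt0 d2_b).
set a' := (a %/ d1)%N; set b' := (b %/ d2)%N.
have [a'_a b'_b] : (a' %| a)%N /\ (b' %| b)%N by rewrite !dvdn_div.
have [a'_gt0 b'_gt0] := (dvdn_gt0 a_gt0 a'_a, dvdn_gt0 b_gt0 b'_b).
have -> : ((a * b) %/ (d1 * d2) = a' * b')%N.
  by rewrite -{1}(divnK d1_a) -{1}(divnK d2_b) mulnACA mulnK // muln_gt0 d1_gt0.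
have co_a b1 b2 : (b1 %| a)%N -> (b2 %| b)%N -> coprime b1 b2.
  by move=> b1_a b2_b; apply: coprime_dvdl b1_a (coprime_dvdr b2_b co_ab).
rewrite FM ?co_a // GM ?co_a // !W_unitary ?muln_gt0 ?d1_gt0 ?a'_gt0 //.
rewrite coprimeMl !coprimeMr [coprime d1 b']co_a // [coprime d2 a']coprime_sym.
rewrite [coprime a' d2]co_a // !andbT.
by case: (coprime d1 a'); case: (coprime d2 b'); rewrite ?mulr0 ?mul0r ?mulr1 // mulrACA.
Qed.

Lemma mult_fun_wconv {F G} : mult_fun F -> mult_fun G -> mult_fun (wconv W F G).
Proof.
move=> F_mult G_mult; split.
  case: F_mult G_mult => [F1 _] [G1 _].
  by rewrite wconv1 W_unitary // coprime1n F1 G1 !mul1r.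
move=> a b a_gt0 b_gt0 co_ab.
rewrite /wconv (perm_big _ (perm_divisors_coprimeM a b a_gt0 b_gt0 co_ab)).
rewrite big_allpairs_dep /= big_distrl; apply: eq_big_seq => d1.
rewrite -dvdn_divisors // => d1_a; rewrite big_distrr; apply: eq_big_seq => d2.
rewrite -dvdn_divisors // => d2_b; exact: wconv_term_coprimeM.
Qed.

Lemma wconv_prime_power F G p k : mult_fun F -> mult_fun G -> prime p -> (0 < k)%N ->
  wconv W F G (p ^ k)%N = F (p ^ k)%N + G (p ^ k)%N.
Proof.
move=> [F1 _] [G1 _] p_pr k_gt0; have p_gt1 := prime_gt1 p_pr.
have pk_gt1 : (1 < p ^ k)%N by rewrite -(expn0 p) ltn_exp2l.
have pk_gt0 := ltnW pk_gt1.
rewrite /wconv (big_seq_only2 _ 1%N (p ^ k)%N) ?divisors_uniq ?divisor1 ?divisors_id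
  ?ltn_eqF //.
  rewrite divn1 divnn pk_gt0 /= F1 G1 !W_unitary // coprime1n coprimen1.
  by rewrite !mulr1 !mul1r addrC.
move=> d; rewrite -dvdn_divisors // => /(dvdn_pfactor _ _ p_pr)[j j_le_k ->] pj1 pjk.
have j_gt0 : (0 < j)%N by case: j pj1 {j_le_k pjk} => //; rewrite expn0 eqxx.
have j_lt_k : (j < k)%N by rewrite ltn_neqAle j_le_k andbT; apply: contraNneq pjk => ->.
rewrite -expnB ?prime_gt0 // W_unitary ?expn_gt0 ?prime_gt0 //.
by rewrite coprime_pexpl // coprime_pexpr ?subn_gt0 // /coprime gcdnn gtn_eqF // mulr0.
Qed.

Lemma comm_ring_of_unitary_weight : is_comm_ring (@mult_fun C) (wconv W) (@pmul C).
Proof.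
have pp_neq1 p k : prime p -> (0 < k)%N -> (p ^ k == 1)%N = false.
  by move=> p_pr k_gt0; rewrite gtn_eqF // -(expn0 p) ltn_exp2l // prime_gt1.
split; first by move=> F G; apply: mult_fun_wconv.
split; first by move=> F G; apply: mult_fun_pmul.
split.
  move=> F G H FM GM HM; have [FGM GHM] := (mult_fun_wconv FM GM, mult_fun_wconv GM HM).
  apply: feq_mult_prime_powers; try exact: mult_fun_wconv.
  by move=> p k p_pr k_gt0; rewrite !wconv_prime_power // addrA.
split.
  move=> F G FM GM; apply: feq_mult_prime_powers; try exact: mult_fun_wconv.
  by move=> p k p_pr k_gt0; rewrite !wconv_prime_power // addrC.
split.
  exists delta1; split; first exact: mult_fun_delta1.
  have delta1M := mult_fun_delta1; split.
    move=> F FM; apply: feq_mult_prime_powers => //; first exact: mult_fun_wconv.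
    by move=> p k p_pr k_gt0; rewrite wconv_prime_power // /delta1 pp_neq1 // add0r.
  move=> F FM; have FsM := mult_fun_pmul FM mult_fun_omega_sign.
  exists (pmul F omega_sign); split => //.
  apply: feq_mult_prime_powers => //; first exact: mult_fun_wconv.
  move=> p k p_pr k_gt0; rewrite wconv_prime_power // /pmul omega_sign_prime_power //.
  by rewrite /delta1 pp_neq1 // mulrN1 subrr.
split; first by move=> F G H _ _ _ m _; rewrite /pmul mulrA.
split; first by move=> F G _ _ m _; rewrite /pmul mulrC.
split.
  exists cst1; split=> [|F _ m _]; first exact: mult_fun_cst1.
  by rewrite /pmul /cst1 mul1r.
move=> F G H FM GM HM; have [FGM FHM] := (mult_fun_pmul FM GM, mult_fun_pmul FM HM).
apply: feq_mult_prime_powers;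
  [exact/mult_fun_pmul/mult_fun_wconv | exact: mult_fun_wconv |].
by move=> p k p_pr k_gt0; rewrite {1}/pmul !wconv_prime_power // /pmul mulrDr.
Qed.

End UnitaryWeight.

End Convolution.

End ArithmeticFunctions.

Theorem mainTheorem11 (C : numClosedFieldType) (W : nat -> nat -> C) :
  is_comm_ring (@mult_fun C) (wconv W) (@pmul C) <->
  (forall a b : nat, (0 < a)%N -> (0 < b)%N ->
     W a b = (if coprime a b then 1 else 0)).
Proof.
split; [exact: unitary_weight_of_comm_ring | exact: comm_ring_of_unitary_weight].
Qed.
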